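(* Let $0<H<1$, $H\neq 1/2$, $\lambda>0$, $\tau>0$, $h>0$, $l>0$, $L>0$, $L'>0$, and let $K_\nu(s)=\frac12\int_0^\infty z^{\nu-1}\exp[-\frac{s}{2}(z+\frac1z)]\,dz$ for $s>0$. Let $(t_k)_{k\ge1}$ be positive times and, for each $k\ge0$, let $r_k$ be either $$r_k=\frac{\Gamma(H+1/2)}{2H\sqrt{\pi}(2\lambda)^H}\,\lambda\, t_{k+1}^{1-H}K_{H-1}(\lambda t_{k+1})\,\tau \quad\text{or}\quad r_k=\frac{\Gamma(H+1/2)}{H\sqrt{\pi}(2\lambda)^H}\,\lambda\, t_{k+1}K_{H-1}(\lambda t_{k+1})\,\tau$$ (the first choice being used for all $k$ when $0<H<1/2$; when $1/2<H<1$ the first choice is used for $k\le k_1$ and the second for $k> k_1$, for some index $k_1$). Let $u^0,u^1,u^2,\dots$ be functions in $L^2$ of the periodic domain $[0,L)\times[0,L')$ (i.e. $L$-periodic in $x$ and $L'$-periodic in $y$) satisfying, for all $k\ge0$ and all $(x,y)$, the implicit difference relation $$\Big(1+\frac{2r_k}{h^2}+\frac{2r_k}{l^2}\Big)u^{k+1}(x,y)-\frac{r_k}{h^2}\big(u^{k+1}(x+h,y)+u^{k+1}(x-h,y)\big)-\frac{r_k}{l^2}\big(u^{k+1}(x,y+l)+u^{k+1}(x,y-l)\big)=u^k(x,y).$$ Then the scheme is unconditionally stable: for every $k\ge0$ (and every $\tau,h,l>0$), $$\|u^k\|_{L^2}^2\le\|u^0\|_{L^2}^2 .$$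
   Context: This is the finite-difference scheme for the equation $\partial_t u=\frac{\Gamma(H+1/2)}{\sqrt{\pi}(2\lambda)^H}\lambda t^H K_{H-1}(\lambda t)(\partial_x^2+\partial_y^2)u$ (Fokker–Planck equation of tempered fractional Brownian motion), discretized implicitly in the variable $t^{2H}$ (nonuniform mesh $t_k=(\tau k)^{1/(2H)}$, so that $t_{k+1}^{2H}-t_k^{2H}=\tau$) and, in the case $1/2<H<1$ after the index $k_1$, in the variable $t^{H}$ (with step $\tau$ in $t^H$). Stability is in the sense of the Fourier (von Neumann) method: $\|\cdot\|_{L^2}$ is the $L^2$ norm over $[0,L)\times[0,L')$. Note $K_{H-1}(s)>0$ for $s>0$, so $r_k>0$. *)

From HB Require Import structures.
From mathcomp Require Import all_boot all_order all_algebra.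
From mathcomp Require Import all_classical all_reals all_analysis.
Set Implicit Arguments. Unset Strict Implicit. Unset Printing Implicit Defensive.
Import Order.TTheory GRing.Theory Num.Theory.
Import numFieldNormedType.Exports.
Local Open Scope classical_set_scope.
Local Open Scope ring_scope.

Definition Gammaf (R : realType) (a : R) : R :=
  Rintegral lebesgue_measure `]0%R, +oo[%classic
    (fun z : R => z `^ (a - 1) * expR (- z)).

Definition besselK (R : realType) (nu s : R) : R :=
  2^-1 * Rintegral lebesgue_measure `]0%R, +oo[%classic
    (fun z : R => z `^ (nu - 1) * expR (- (s / 2) * (z + z^-1))).

Definition r_first (R : realType) (H lam tau tk1 : R) : R :=
  Gammaf (H + 2^-1) / (2 * H * Num.sqrt pi * (2 * lam) `^ H)
  * lam * tk1 `^ (1 - H) * besselK (H - 1) (lam * tk1) * tau.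

Definition r_second (R : realType) (H lam tau tk1 : R) : R :=
  Gammaf (H + 2^-1) / (H * Num.sqrt pi * (2 * lam) `^ H)
  * lam * tk1 * besselK (H - 1) (lam * tk1) * tau.

Definition leb2 (R : realType) :=
  ((@lebesgue_measure R) \x (@lebesgue_measure R))%E.

Definition cell (R : realType) (L L' : R) : set (R * R) :=
  `[0%R, L[%classic `*` `[0%R, L'[%classic.

Definition L2norm2 (R : realType) (L L' : R) (f : R * R -> R) : \bar R :=
  (\int[@leb2 R]_(z in cell L L') ((f z) ^+ 2)%:E)%E.

From HB Require Import structures.
From mathcomp Require Import all_boot all_order all_algebra.
From mathcomp Require Import all_classical all_reals all_analysis.
Import Order.TTheory GRing.Theory Num.Theory.
Import numFieldNormedType.Exports.
Local Open Scope classical_set_scope.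
Local Open Scope ring_scope.
From mathcomp Require Import measurable_realfun.
From mathcomp Require Import ring.

(** With a = r_k/h^2 and b = r_k/l^2, the scheme reads
    w = (1+2a+2b)v - a(p+q) - b(s+t), where v = u^{k+1}, w = u^k and p, q, s, t
    are the four shifts of v.  Pointwise,
    w^2 + a(p^2+q^2) + b(s^2+t^2) - (1+2a+2b)v^2
      = (w-v)^2 + a((v-p)^2+(v-q)^2) + b((v-s)^2+(v-t)^2),
    which is nonnegative because r_k >= 0 (Gamma and K_{H-1} are integrals of
    positive functions).  Integrating over the period cell, each shifted square
    has the same integral as v^2 (translation invariance of Lebesgue measure,
    periodicity and Tonelli), so ||u^{k+1}||^2 <= ||u^k||^2 once the finite
    quantity 2(a+b)||u^{k+1}||^2 is cancelled. *)

Set Implicit Arguments. Unset Strict Implicit. Unset Printing Implicit Defensive.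

Section periodic_int.
Variables (U V : zmodType) (f : U -> V) (T : U).

Lemma periodicz : periodic f T -> forall (z : int) a, f (a + T *~ z) = f a.
Proof.
move=> fT [] n a; first exact: periodicn.
by rewrite -[in RHS](subrK (T *+ n.+1) a) periodicn.
Qed.

End periodic_int.

Section mod_period.
Variables (R : realType) (P : R).
Hypothesis P_gt0 : 0 < P.

Definition mod_period (x : R) : R := x - P *~ Num.floor (x / P).

Lemma mod_period_itv x : 0 <= mod_period x < P.
Proof.
have /andP[fl_le lt_fl1] := floor_itv (x / P).
have -> : mod_period x = (x / P - (Num.floor (x / P))%:~R) * P.
  by rewrite /mod_period mulrBl divfK ?gt_eqF // mulrzl.
rewrite mulr_ge0 ?subr_ge0 ?(ltW P_gt0) //=.
by rewrite -[ltRHS]mul1r ltr_pM2r // ltrBlDl -intrD1.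
Qed.

Lemma periodic_mod_period (V : zmodType) (f : R -> V) :
  periodic f P -> forall x, f (mod_period x) = f x.
Proof. by move=> fP x; rewrite /mod_period -mulrNz periodicz. Qed.

Lemma measurable_mod_period : measurable_fun setT mod_period.
Proof.
apply: measurable_funB; first exact: measurable_id.
apply: nondecreasing_measurable => // x y le_xy.
by rewrite ler_pMz2l // le_floor // ler_pM2r ?invr_gt0.
Qed.

End mod_period.

Section lebesgue_shift.
Local Open Scope ereal_scope.
Variable R : realType.
Local Notation mu := (@lebesgue_measure R).

(* Stated on [measurableTypeR R], the carrier of [lebesgue_measure], so that it
   can be fed to [ge0_integral_pushforward]. *)
Lemma measurable_shift (c : R) :
  measurable_fun [set: measurableTypeR R] (shift c : _ -> measurableTypeR R).
Proof. by apply: measurable_funD => //; exact: measurable_cst. Qed.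

Lemma shift_preimage_itv (c : R) (b1 b2 : bool) (a b : R) :
  shift c @^-1` [set` Interval (BSide b1 a) (BSide b2 b)] =
  [set` Interval (BSide b1 (a - c)%R) (BSide b2 (b - c)%R)].
Proof.
by apply/seteqP; split => x /=; rewrite !in_itv /= lteifBlDr lteifBrDr.
Qed.

Lemma lebesgue_measure_shift (c : R) (A : set R) : measurable A ->
  pushforward mu (shift c : R -> measurableTypeR R) A = mu A.
Proof.
move=> mA; apply/esym/lebesgue_measure_unique => //=; first exact: measurable_shift.
move=> _ _ [[a b]] _ <-.
rewrite /pushforward shift_preimage_itv !lebesgue_measure_itv /= !lte_fin.
by rewrite ltrD2r -!EFinD opprB addrA subrK.
Qed.

Lemma ge0_integral_shift (c : R) (D : set R) (f : R -> \bar R) :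
  measurable D -> measurable_fun D f -> (forall x, D x -> 0 <= f x) ->
  \int[mu]_(x in shift c @^-1` D) f (x + c)%R = \int[mu]_(x in D) f x.
Proof.
move=> mD mf f0.
have := ge0_integral_pushforward (measurable_shift c) mu mD mf.
move=> <-; last by move=> x /[!inE]; exact: f0.
apply: eq_measure_integral => [|mc A mA _]; first exact: measurable_shift.
exact: lebesgue_measure_shift.
Qed.

Lemma ge0_integral_shift_itv (c a b : R) (f : R -> \bar R) :
  measurable_fun setT f -> (forall x, 0 <= f x) ->
  \int[mu]_(x in `[a, b[) f (x + c)%R = \int[mu]_(x in `[(a + c)%R, (b + c)%R[) f x.
Proof.
move=> mf f0; rewrite -[RHS](ge0_integral_shift c) //; last exact: measurable_funS mf.
by rewrite shift_preimage_itv !addrK.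
Qed.

End lebesgue_shift.

Section periodic_integral.
Local Open Scope ereal_scope.
Variable R : realType.
Local Notation mu := (@lebesgue_measure R).

Lemma ge0_integral_itv_co_split (a b d : R) (f : R -> \bar R) :
  (a <= b <= d)%R -> measurable_fun setT f -> (forall x, 0 <= f x) ->
  \int[mu]_(x in `[a, d[) f x =
  \int[mu]_(x in `[a, b[) f x + \int[mu]_(x in `[b, d[) f x.
Proof.
move=> /andP[ab bd] mf f0.
rewrite (@itv_bndbnd_setU _ _ _ (BLeft b)) ?bnd_simp //.
rewrite ge0_integral_setU //; first exact: measurable_funS mf.
apply/disj_setPS => x [] /=; rewrite !in_itv /= => /andP[_ xb] /andP[bx _].
by move: (lt_le_trans xb bx); rewrite ltxx.
Qed.

Variables (L : R) (f : R -> R).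
Hypotheses (L_gt0 : (0 < L)%R) (mf : measurable_fun setT f)
  (f_ge0 : forall x, (0 <= f x)%R) (fL : periodic f L).

Lemma ge0_integral_periodic_shift (c : R) :
  \int[mu]_(x in `[0%R, L[) (f (x + c))%:E = \int[mu]_(x in `[0%R, L[) (f x)%:E.
Proof.
have mfE : measurable_fun setT (fun x => (f x)%:E) by exact/measurable_EFinP.
have fE0 x : 0 <= (f x)%:E by rewrite lee_fin.
(* Replace c by its residue c' in [0, L), then move the piece [L, L + c') of
   [c', L + c') back onto [0, c'). *)
pose c' := mod_period L c.
have /andP[c'_ge0 c'_ltL] : (0 <= c' < L)%R by exact: mod_period_itv.
transitivity (\int[mu]_(x in `[0%R, L[) (f (x + c'))%:E).
  apply: eq_integral => x _; congr EFin.
  apply/esym/(@periodic_mod_period _ _ _ (fun y => f (x + y))) => y /=.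
  by rewrite addrA fL.
rewrite (@ge0_integral_shift_itv _ c' _ _ (fun x => (f x)%:E)) // add0r.
rewrite (@ge0_integral_itv_co_split _ L) ?lerDl ?(ltW c'_ltL) //.
rewrite [in RHS](@ge0_integral_itv_co_split _ c') ?c'_ge0 ?(ltW c'_ltL) //.
have shiftL : \int[mu]_(x in `[0%R, c'[) (f (x + L))%:E =
              \int[mu]_(x in `[(0 + L)%R, (c' + L)%R[) (f x)%:E.
  exact: ge0_integral_shift_itv.
rewrite add0r [(c' + L)%R]addrC in shiftL.
rewrite addeC -shiftL; congr (_ + _).
by apply: eq_integral => x _; rewrite fL.
Qed.

End periodic_integral.

Section cell_integral.
Local Open Scope ereal_scope.
Variables (R : realType) (L L' : R).
Local Notation mu := (@lebesgue_measure R).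

Lemma measurable_cell : measurable (cell L L').
Proof. exact: measurableX. Qed.

Lemma cell_fubini_tonelli1 (F : R * R -> \bar R) :
  measurable_fun setT F -> (forall z, 0 <= F z) ->
  \int[@leb2 R]_(z in cell L L') F z =
  \int[mu]_(x in `[0%R, L[) \int[mu]_(y in `[0%R, L'[) F (x, y).
Proof.
move=> mF F0; rewrite integral_mkcond /leb2 fubini_tonelli1 //; last 2 first.
- by apply/(measurable_restrictT _ measurable_cell); exact: measurable_funS mF.
- by move=> z; rewrite /patch; case: ifPn.
rewrite [RHS]integral_mkcond; apply: eq_integral => x _.
rewrite /fubini_F /patch; case: ifPn => xA.
  by rewrite [RHS]integral_mkcond; apply: eq_integral => y _; rewrite in_setX xA.
rewrite -[RHS](integral0 mu setT); apply: eq_integral => y _.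
by rewrite in_setX (negbTE xA).
Qed.

Lemma cell_fubini_tonelli2 (F : R * R -> \bar R) :
  measurable_fun setT F -> (forall z, 0 <= F z) ->
  \int[@leb2 R]_(z in cell L L') F z =
  \int[mu]_(y in `[0%R, L'[) \int[mu]_(x in `[0%R, L[) F (x, y).
Proof.
move=> mF F0; rewrite integral_mkcond /leb2 fubini_tonelli2 //; last 2 first.
- by apply/(measurable_restrictT _ measurable_cell); exact: measurable_funS mF.
- by move=> z; rewrite /patch; case: ifPn.
rewrite [RHS]integral_mkcond; apply: eq_integral => y _.
rewrite /fubini_G /patch; case: ifPn => yB.
  by rewrite [RHS]integral_mkcond; apply: eq_integral => x _; rewrite in_setX yB andbT.
rewrite -[RHS](integral0 mu setT); apply: eq_integral => x _.
by rewrite in_setX (negbTE yB) andbF.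
Qed.

End cell_integral.

Section pair_shift.
Variable R : realType.

Lemma measurable_shift_fst (c : R) :
  measurable_fun setT (fun z : R * R => (z.1 + c, z.2)).
Proof.
apply: measurable_fun_pair => //.
by apply: measurable_funD => //; exact: measurable_cst.
Qed.

Lemma measurable_shift_snd (c : R) :
  measurable_fun setT (fun z : R * R => (z.1, z.2 + c)).
Proof.
apply: measurable_fun_pair => //.
by apply: measurable_funD => //; exact: measurable_cst.
Qed.

End pair_shift.

Section cell_shift.
Local Open Scope ereal_scope.
Variables (R : realType) (L L' : R) (g : R * R -> R).
Hypotheses (L_gt0 : (0 < L)%R) (L'_gt0 : (0 < L')%R)
  (mg : measurable_fun setT g) (g_ge0 : forall z, (0 <= g z)%R)
  (gL : forall y, periodic (fun x => g (x, y)) L)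
  (gL' : forall x, periodic (fun y => g (x, y)) L').

Lemma ge0_integral_cell_shift1 (c : R) :
  \int[@leb2 R]_(z in cell L L') (g (z.1 + c, z.2))%:E =
  \int[@leb2 R]_(z in cell L L') (g z)%:E.
Proof.
have mgE : measurable_fun setT (fun z => (g z)%:E) by exact/measurable_EFinP.
have mgcE : measurable_fun setT (fun z : R * R => (g (z.1 + c, z.2))%:E).
  by apply/measurable_EFinP; exact: measurableT_comp mg (measurable_shift_fst c).
rewrite !cell_fubini_tonelli2 //; try by move=> z; rewrite lee_fin.
apply: eq_integral => y _.
apply: (ge0_integral_periodic_shift (f := fun x => g (x, y))) => //.
exact: measurable_fun_pair1.
Qed.

Lemma ge0_integral_cell_shift2 (c : R) :
  \int[@leb2 R]_(z in cell L L') (g (z.1, z.2 + c))%:E =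
  \int[@leb2 R]_(z in cell L L') (g z)%:E.
Proof.
have mgE : measurable_fun setT (fun z => (g z)%:E) by exact/measurable_EFinP.
have mgcE : measurable_fun setT (fun z : R * R => (g (z.1, z.2 + c))%:E).
  by apply/measurable_EFinP; exact: measurableT_comp mg (measurable_shift_snd c).
rewrite !cell_fubini_tonelli1 //; try by move=> z; rewrite lee_fin.
apply: eq_integral => x _.
apply: (ge0_integral_periodic_shift (f := fun y => g (x, y))) => //.
exact: measurable_fun_pair2.
Qed.

End cell_shift.

Lemma measurable_fun_periodic2 (R : realType) (L L' : R) (v : R * R -> R) :
  0 < L -> 0 < L' -> measurable_fun (cell L L') v ->
  (forall y, periodic (fun x => v (x, y)) L) ->
  (forall x, periodic (fun y => v (x, y)) L') ->
  measurable_fun setT v.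
Proof.
move=> L_gt0 L'_gt0 mv vL vL'.
have -> : v = v \o (fun z => (mod_period L z.1, mod_period L' z.2)).
  apply/funext => -[x y] /=.
  by rewrite (periodic_mod_period (vL' _)) (periodic_mod_period (vL _)).
apply: (measurable_comp (measurable_cell L L')) => //.
- by move=> _ [z _ <-]; split; rewrite /= in_itv /= mod_period_itv.
- apply: measurable_fun_pair.
  + exact: measurableT_comp (measurable_mod_period L_gt0) measurable_fst.
  + exact: measurableT_comp (measurable_mod_period L'_gt0) measurable_snd.
Qed.

Lemma implicit_step_sqr_le (R : realDomainType) (a b v p q s t w : R) :
  0 <= a -> 0 <= b ->
  (1 + 2 * a + 2 * b) * v - a * (p + q) - b * (s + t) = w ->
  (1 + 2 * a + 2 * b) * v ^+ 2 <= w ^+ 2 + a * (p ^+ 2 + q ^+ 2) + b * (s ^+ 2 + t ^+ 2).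
Proof.
move=> a_ge0 b_ge0 wE; rewrite -subr_ge0.
have -> : w ^+ 2 + a * (p ^+ 2 + q ^+ 2) + b * (s ^+ 2 + t ^+ 2)
          - (1 + 2 * a + 2 * b) * v ^+ 2
        = (w - v) ^+ 2 + a * ((v - p) ^+ 2 + (v - q) ^+ 2)
          + b * ((v - s) ^+ 2 + (v - t) ^+ 2).
  by rewrite -wE; ring.
by rewrite !addr_ge0 ?sqr_ge0 // mulr_ge0 // addr_ge0 ?sqr_ge0.
Qed.

Lemma ge0_integralDZ d (T : measurableType d) (R : realType) (mu : measure T R)
    (D : set T) (f g1 g2 : T -> \bar R) (k : R) :
  measurable D -> 0 <= k ->
  measurable_fun D f -> measurable_fun D g1 -> measurable_fun D g2 ->
  (forall x, D x -> (0 <= f x)%E) -> (forall x, D x -> (0 <= g1 x)%E) ->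
  (forall x, D x -> (0 <= g2 x)%E) ->
  (\int[mu]_(x in D) (f x + k%:E * (g1 x + g2 x)) =
   \int[mu]_(x in D) f x + k%:E * (\int[mu]_(x in D) g1 x + \int[mu]_(x in D) g2 x))%E.
Proof.
move=> mD k_ge0 mf mg1 mg2 f_ge0 g1_ge0 g2_ge0.
have g12_ge0 x : D x -> (0 <= g1 x + g2 x)%E.
  by move=> Dx; rewrite adde_ge0 ?g1_ge0 ?g2_ge0.
rewrite ge0_integralD //; last 2 first.
- by move=> x Dx; rewrite mule_ge0 ?lee_fin ?g12_ge0.
- exact/measurable_funeM/emeasurable_funD.
by rewrite ge0_integralZl_EFin ?ge0_integralD //; exact: emeasurable_funD.
Qed.

Section implicit_step.
Local Open Scope ereal_scope.
Variables (R : realType) (L L' : R) (v : R * R -> R).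
Hypotheses (L_gt0 : (0 < L)%R) (L'_gt0 : (0 < L')%R) (mv : measurable_fun setT v)
  (vL : forall y, periodic (fun x => v (x, y)) L)
  (vL' : forall x, periodic (fun y => v (x, y)) L').

Lemma measurable_sqr_comp (s : R * R -> R * R) : measurable_fun setT s ->
  measurable_fun (cell L L') (fun z => (v (s z) ^+ 2)%:E).
Proof.
move=> ms; apply/measurable_EFinP/measurable_funX/measurable_funTS.
exact: measurableT_comp mv ms.
Qed.

Lemma L2norm2_shift1 (c : R) :
  \int[@leb2 R]_(z in cell L L') (v (z.1 + c, z.2) ^+ 2)%:E = L2norm2 L L' v.
Proof.
apply: (@ge0_integral_cell_shift1 _ _ _ (fun z => v z ^+ 2)%R) => //.
- exact: measurable_funX.
- by move=> z; rewrite sqr_ge0.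
- by move=> y x /=; rewrite vL.
Qed.

Lemma L2norm2_shift2 (c : R) :
  \int[@leb2 R]_(z in cell L L') (v (z.1, z.2 + c) ^+ 2)%:E = L2norm2 L L' v.
Proof.
apply: (@ge0_integral_cell_shift2 _ _ _ (fun z => v z ^+ 2)%R) => //.
- exact: measurable_funX.
- by move=> z; rewrite sqr_ge0.
- by move=> x y /=; rewrite vL'.
Qed.

Lemma L2norm2_scheme_le (a b h l : R) (w : R * R -> R) :
  (0 <= a)%R -> (0 <= b)%R -> measurable_fun (cell L L') w ->
  (forall x y, (1 + 2 * a + 2 * b) * v (x, y)
      - a * (v (x + h, y) + v (x - h, y))
      - b * (v (x, y + l) + v (x, y - l)) = w (x, y))%R ->
  (1 + 2 * a + 2 * b)%:E * L2norm2 L L' v <=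
  L2norm2 L L' w + a%:E * (L2norm2 L L' v + L2norm2 L L' v)
                 + b%:E * (L2norm2 L L' v + L2norm2 L L' v).
Proof.
move=> a_ge0 b_ge0 mw scheme.
have mC := measurable_cell L L'.
have sq_ge0 (f : R * R -> R) z : 0 <= (f z ^+ 2)%:E by rewrite lee_fin sqr_ge0.
pose vE z := (v (z.1 + h, z.2) ^+ 2)%:E; pose vW z := (v (z.1 - h, z.2) ^+ 2)%:E.
pose vN z := (v (z.1, z.2 + l) ^+ 2)%:E; pose vS z := (v (z.1, z.2 - l) ^+ 2)%:E.
pose Sh z := (w z ^+ 2)%:E + a%:E * (vE z + vW z).
have mv2 : measurable_fun (cell L L') (fun z => (v z ^+ 2)%:E).
  exact/measurable_EFinP/measurable_funX/measurable_funTS.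
have mw2 : measurable_fun (cell L L') (fun z => (w z ^+ 2)%:E).
  exact/measurable_EFinP/measurable_funX.
have mvE := measurable_sqr_comp (measurable_shift_fst h).
have mvW := measurable_sqr_comp (measurable_shift_fst (- h)).
have mvN := measurable_sqr_comp (measurable_shift_snd l).
have mvS := measurable_sqr_comp (measurable_shift_snd (- l)).
have mSh : measurable_fun (cell L L') Sh.
  by apply: emeasurable_funD => //; apply: measurable_funeM; exact: emeasurable_funD.
have Sh_ge0 z : 0 <= Sh z by rewrite /Sh adde_ge0 ?mule_ge0 ?adde_ge0 ?sq_ge0 ?lee_fin.
have : \int[@leb2 R]_(z in cell L L') ((1 + 2 * a + 2 * b)%:E * (v z ^+ 2)%:E)
    <= \int[@leb2 R]_(z in cell L L') (Sh z + b%:E * (vN z + vS z)).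
  apply: ge0_le_integral => //.
  - by move=> z _; rewrite mule_ge0 // lee_fin !addr_ge0 ?mulr_ge0.
  - exact: measurable_funeM.
  - by apply: emeasurable_funD => //; apply: measurable_funeM; exact: emeasurable_funD.
  - move=> [x y] _; rewrite /Sh /vE /vW /vN /vS /= -!EFinD -!EFinM lee_fin.
    by apply: implicit_step_sqr_le => //; rewrite scheme.
rewrite ge0_integralZl_EFin //; last by rewrite !addr_ge0 ?mulr_ge0.
rewrite (@ge0_integralDZ _ _ _ (@leb2 R) _ Sh) //; last 2 first.
- by move=> z _; exact: sq_ge0.
- by move=> z _; exact: sq_ge0.
rewrite /Sh (@ge0_integralDZ _ _ _ (@leb2 R) _ (fun z => (w z ^+ 2)%:E)) //; last 2 first.
- by move=> z _; exact: sq_ge0.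
- by move=> z _; exact: sq_ge0.
by rewrite /vE /vW /vN /vS !L2norm2_shift1 !L2norm2_shift2.
Qed.

Lemma L2norm2_implicit_step (a b h l : R) (w : R * R -> R) :
  (0 <= a)%R -> (0 <= b)%R -> measurable_fun (cell L L') w ->
  L2norm2 L L' v < +oo ->
  (forall x y, (1 + 2 * a + 2 * b) * v (x, y)
      - a * (v (x + h, y) + v (x - h, y))
      - b * (v (x, y + l) + v (x, y - l)) = w (x, y))%R ->
  L2norm2 L L' v <= L2norm2 L L' w.
Proof.
move=> a_ge0 b_ge0 mw v_fin scheme.
have := L2norm2_scheme_le a_ge0 b_ge0 mw scheme.
have v_finE : L2norm2 L L' v \is a fin_num.
  by rewrite ge0_fin_numE // integral_ge0 // => z _; rewrite lee_fin sqr_ge0.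
rewrite -(fineK v_finE) -!EFinD -!EFinM -addeA -EFinD.
set x := fine _; set K := (a * (x + x) + b * (x + x))%R.
by rewrite (_ : ((1 + 2 * a + 2 * b) * x = x + K)%R) ?EFinD ?leeD2rE //; rewrite /K; ring.
Qed.

End implicit_step.

Section rate_nonneg.
Variable R : realType.

Lemma Gammaf_ge0 (a : R) : 0 <= Gammaf a.
Proof. by apply: Rintegral_ge0 => x _; rewrite mulr_ge0 ?powR_ge0 ?expR_ge0. Qed.

Lemma besselK_ge0 (nu s : R) : 0 <= besselK nu s.
Proof.
rewrite mulr_ge0 ?invr_ge0 //.
by apply: Rintegral_ge0 => x _; rewrite mulr_ge0 ?powR_ge0 ?expR_ge0.
Qed.

Lemma r_first_ge0 (H lam tau t : R) :
  0 <= H -> 0 <= lam -> 0 <= tau -> 0 <= r_first H lam tau t.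
Proof.
move=> H_ge0 lam_ge0 tau_ge0.
rewrite mulr_ge0 // mulr_ge0 ?besselK_ge0 // mulr_ge0 ?powR_ge0 // mulr_ge0 //.
by rewrite divr_ge0 ?Gammaf_ge0 // !mulr_ge0 ?powR_ge0 ?sqrtr_ge0.
Qed.

Lemma r_second_ge0 (H lam tau t : R) :
  0 <= H -> 0 <= lam -> 0 <= tau -> 0 <= t -> 0 <= r_second H lam tau t.
Proof.
move=> H_ge0 lam_ge0 tau_ge0 t_ge0.
rewrite mulr_ge0 // mulr_ge0 ?besselK_ge0 // mulr_ge0 // mulr_ge0 //.
by rewrite divr_ge0 ?Gammaf_ge0 // !mulr_ge0 ?powR_ge0 ?sqrtr_ge0.
Qed.

End rate_nonneg.

Unset Implicit Arguments.

Theorem mainTheorem2 (R : realType) (H lam tau h l L L' : R)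
  (t : nat -> R) (r : nat -> R) (k1 : nat) (u : nat -> R * R -> R) :
  0 < H -> H < 1 -> H != 2^-1 ->
  0 < lam -> 0 < tau -> 0 < h -> 0 < l -> 0 < L -> 0 < L' ->
  (forall k, (0 < k)%N -> 0 < t k) ->
  (H < 2^-1 -> forall k, r k = r_first H lam tau (t k.+1)) ->
  (2^-1 < H -> forall k, ((k <= k1)%N -> r k = r_first H lam tau (t k.+1)) /\
                         ((k1 < k)%N -> r k = r_second H lam tau (t k.+1))) ->
  (forall k x y, u k (x + L, y) = u k (x, y)) ->
  (forall k x y, u k (x, y + L') = u k (x, y)) ->
  (forall k, measurable_fun (cell L L') (u k)) ->
  (forall k, (L2norm2 L L' (u k) < +oo)%E) ->
  (forall k x y,
      (1 + 2 * r k / h ^+ 2 + 2 * r k / l ^+ 2) * u k.+1 (x, y)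
      - r k / h ^+ 2 * (u k.+1 (x + h, y) + u k.+1 (x - h, y))
      - r k / l ^+ 2 * (u k.+1 (x, y + l) + u k.+1 (x, y - l))
      = u k (x, y)) ->
  forall k, (L2norm2 L L' (u k) <= L2norm2 L L' (u 0%N))%E.
Proof.
move=> H_gt0 _ H_neq_half lam_gt0 tau_gt0 _ _ L_gt0 L'_gt0 t_gt0 r_low r_high
  uL uL' mu_cell u_fin scheme.
have r_ge0 k : 0 <= r k.
  have [H_lt|H_gt|H_eq] := ltgtP H 2^-1; last by rewrite H_eq eqxx in H_neq_half.
  - by rewrite r_low // r_first_ge0 ?ltW.
  - have [r_le r_gt] := r_high H_gt k; have [k_le|k_gt] := leqP k k1.
    + by rewrite r_le // r_first_ge0 ?ltW.
    + by rewrite r_gt // r_second_ge0 ?ltW ?t_gt0.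
have uLx k y : periodic (fun x => u k (x, y)) L by move=> x; exact: uL.
have uLy k x : periodic (fun y => u k (x, y)) L' by move=> y; exact: uL'.
have mu_setT k : measurable_fun setT (u k).
  exact: measurable_fun_periodic2 L_gt0 L'_gt0 (mu_cell k) (uLx k) (uLy k).
have step k : (L2norm2 L L' (u k.+1) <= L2norm2 L L' (u k))%E.
  apply: (L2norm2_implicit_step L_gt0 L'_gt0 (mu_setT k.+1) (uLx k.+1) (uLy k.+1)
    (a := r k / h ^+ 2) (b := r k / l ^+ 2)) => //.
  - by rewrite divr_ge0 ?sqr_ge0.
  - by rewrite divr_ge0 ?sqr_ge0.
  - by move=> x y; rewrite !mulrA; exact: scheme.
by move=> k; apply: (nonincreasing_seqP _).1 step _ _ (leq0n k).
Qed.
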